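(* Let $0<r_j<\infty$ and $0<s_j<\infty$ for $j=1,\dots,n$, let $\rho=\otimes_{j=1}^n\gamma(r_j)$ and $\sigma=\otimes_{j=1}^n\gamma(s_j)$. Let $\alpha>1$ and let $V_{\sigma(\alpha-1)}$ and $V_{\rho(\alpha)}$ denote the covariance matrices of the gaussian states $\sigma^{\alpha-1}/\operatorname{tr}\sigma^{\alpha-1}$ and $\rho^\alpha/\operatorname{tr}\rho^\alpha$ respectively. Then $D_\alpha(\rho\|\sigma)<\infty\iff V_{\sigma(\alpha-1)}>V_{\rho(\alpha)}$.
   Context: One-mode Fock space: $\ell^2(\mathbb{Z}_{\ge 0})$ with orthonormal particle basis $\{|k\rangle\}$; $n$-mode space is the $n$-fold tensor product. For $0<s<\infty$, $\gamma(s)=(1-e^{-s})\sum_{k\ge0}e^{-ks}|k\rangle\langle k|$. For $\beta>0$, $\gamma(\mathbf{s})^\beta/\operatorname{tr}\gamma(\mathbf{s})^\beta=\otimes_j\gamma(\beta s_j)$, and the covariance matrix of $\otimes_j\gamma(t_j)$ is $\frac12\operatorname{diag}(\coth\frac{t_1}{2},\dots,\coth\frac{t_n}{2})\otimes I_2$. $A>B$ means $A-B$ is positive definite. For states $\rho=\sum_i p_i|x_i\rangle\langle x_i|$, $\sigma=\sum_j q_j|y_j\rangle\langle y_j|$ (spectral decompositions), $D_\alpha(\rho\|\sigma)=\frac{1}{\alpha-1}\log\sum_{i,j}p_i^\alpha q_j^{1-\alpha}|\langle x_i|y_j\rangle|^2$. *)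

From HB Require Import structures.
From mathcomp Require Import all_boot all_order all_algebra.
From mathcomp Require Import all_classical all_reals all_analysis.
From mathcomp Require Import mxtens.
Set Implicit Arguments. Unset Strict Implicit. Unset Printing Implicit Defensive.
Import Order.TTheory GRing.Theory Num.Theory.
Local Open Scope ring_scope.

(* Orthonormal particle basis of the n-mode Fock space: |k> with k : 'I_n -> nat. *)
Definition fock_index (n : nat) := {ffun 'I_n -> nat}.

(* |<k|l>|^2 for basis vectors of the n-mode Fock space (orthonormal basis). *)
Definition fock_overlap2 {R : realType} (n : nat) (k l : fock_index n) : R :=
  (k == l)%:R.

(* Eigenvalue of gamma(t) = (1 - e^{-t}) sum_k e^{-k t} |k><k| on |k>. *)
Definition gamma_eig {R : realType} (t : R) (k : nat) : R :=
  (1 - expR (- t)) * expR (- (k%:R * t)).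

(* Eigenvalue of (tensor_j gamma(t_j)) on the basis vector |k> = tensor_j |k_j>;
   the spectral decomposition of this state is in the Fock basis. *)
Definition prod_gamma_eig {R : realType} (n : nat) (t : 'I_n -> R)
  (k : fock_index n) : R := \prod_(j < n) gamma_eig (t j) (k j).

(* D_alpha for states rho = sum_i p_i |x_i><x_i|, sigma = sum_j q_j |y_j><y_j|,
   given the eigenvalues p, q and overlaps ov i j = |<x_i|y_j>|^2:
   D_alpha = 1/(alpha-1) log sum_{i,j} p_i^alpha q_j^(1-alpha) |<x_i|y_j>|^2,
   valued in the extended reals (+oo when the sum diverges). *)
Definition renyi_sum {R : realType} {I J : choiceType} (p : I -> R) (q : J -> R)
  (ov : I -> J -> R) (a : R) : \bar R :=
  \esum_(ij in [set: I * J]) ((p ij.1 `^ a) * (q ij.2 `^ (1 - a))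
                                 * ov ij.1 ij.2)%:E.

Definition renyi_div {R : realType} {I J : choiceType} (p : I -> R) (q : J -> R)
  (ov : I -> J -> R) (a : R) : \bar R :=
  let S := renyi_sum p q ov a in
  if S == +oo%E then +oo%E else ((a - 1)^-1 * ln (fine S))%:E.

Definition renyi_prod_gamma {R : realType} (n : nat) (r s : 'I_n -> R) (a : R)
  : \bar R :=
  renyi_div (prod_gamma_eig r) (prod_gamma_eig s) (@fock_overlap2 R n) a.

Definition coth {R : realType} (x : R) : R :=
  (expR x + expR (- x)) / (expR x - expR (- x)).

Definition cov_prod_gamma {R : realType} (n : nat) (t : 'I_n -> R)
  : 'M[R]_(n * 2) :=
  diag_mx (\row_(j < n) (2^-1 * coth (t j / 2))) *t (1%:M : 'M[R]_2).

Definition mx_gt {R : realType} (m : nat) (A B : 'M[R]_m) : Prop :=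
  forall v : 'rV[R]_m, v != 0 -> 0 < (v *m (A - B) *m v^T) 0 0.

From HB Require Import structures.
From mathcomp Require Import all_boot all_order all_algebra.
From mathcomp Require Import all_classical all_reals all_analysis.
From mathcomp Require Import mxtens.
From mathcomp Require Import finmap ring.
Import Order.TTheory GRing.Theory Num.Theory.
Local Open Scope ring_scope.

(* Both states are diagonal in the Fock basis, so the Renyi sum collapses to
   sum_k prod_j c_j x_j^(k_j) with x_j = exp((alpha - 1) s_j - alpha r_j): a
   product of geometric series, finite iff every x_j < 1, i.e. iff
   (alpha - 1) s_j < alpha r_j for all j.  The two covariance matrices are
   diagonal with entries coth(t/2)/2, and coth decreases strictly on (0, oo), so
   the same mode-wise inequalities characterize V_sigma(alpha-1) > V_rho(alpha). *)

Section Coth.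
Variable R : realType.

Lemma cothE (x : R) : x != 0 -> coth x = 1 + 2 / (expR (2 * x) - 1).
Proof.
move=> x0; rewrite /coth expRN expRM_natl.
have y0 : expR x != 0 by rewrite expR_eq0.
have y2 : expR x ^+ 2 - 1 != 0.
  have : expR (2 * x) != expR 0 by rewrite (inj_eq (@expR_inj R)) mulf_neq0.
  by rewrite expR0 expRM_natl subr_eq0.
have yV : expR x - (expR x)^-1 = (expR x ^+ 2 - 1) / expR x by field.
by rewrite yV; field; rewrite y0 y2.
Qed.

Lemma ltr_coth : {in Num.pos &, {mono (@coth R) : x y /~ x < y}}.
Proof.
move=> x y; rewrite !posrE => x0 y0.
have den_gt0 z : 0 < z -> 0 < expR (2 * z) - 1 :> R.
  by move=> z0; rewrite subr_gt0 -expR0 ltr_expR mulr_gt0.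
rewrite !cothE ?gt_eqF // ltrD2l ltr_pM2l // ltf_pV2 ?posrE ?den_gt0 //.
by rewrite ltrD2r ltr_expR ltr_pM2l.
Qed.
End Coth.

Lemma tensmx_diag (R : pzRingType) m n (d : 'rV[R]_m) (e : 'rV[R]_n) :
  diag_mx d *t diag_mx e =
  diag_mx (\row_k (d 0 (mxtens_unindex k).1 * e 0 (mxtens_unindex k).2)).
Proof.
apply/matrixP => i j; rewrite !mxE -(inj_eq (can_inj (@mxtens_unindexK m n))).
case: (mxtens_unindex i) (mxtens_unindex j) => [a b] [a' b'] /=.
rewrite xpair_eqE.
by case: (a == a'); case: (b == b'); rewrite /= ?mulr1n ?mulr0n ?mulr0 ?mul0r.
Qed.

Lemma mx_gt_diag (R : realType) m (d1 d2 : 'rV[R]_m) :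
  mx_gt (diag_mx d1) (diag_mx d2) <-> (forall i, d2 0 i < d1 0 i).
Proof.
have quadE (v : 'rV[R]_m) :
    (v *m (diag_mx d1 - diag_mx d2) *m v^T) 0 0 = \sum_i v 0 i ^+ 2 * (d1 0 i - d2 0 i).
  rewrite -linearB mul_mx_diag !mxE; apply: eq_bigr => i _; rewrite !mxE; ring.
rewrite /mx_gt; split=> [gt_d i | lt_d v v0].
- have ei0 : delta_mx 0 i != 0 :> 'rV[R]_m.
    by apply/negP => /eqP/rowP/(_ i); rewrite !mxE !eqxx => /eqP; rewrite oner_eq0.
  have := gt_d _ ei0; rewrite quadE (bigD1 i) //= big1 => [|j ji].
    by rewrite !mxE !eqxx expr1n mul1r addr0 subr_gt0.
  by rewrite mxE (negPf ji) andbF expr0n mul0r.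
- have [i vi] : exists i, v 0 i != 0.
    apply/existsP; apply: contraR v0 => /existsPn v_eq0.
    by apply/eqP/rowP => i; rewrite mxE; apply/eqP; move: (v_eq0 i); rewrite negbK.
  rewrite quadE (bigD1 i) //= ltr_wpDr //.
    by apply: sumr_ge0 => j _; rewrite mulr_ge0 ?sqr_ge0 // subr_ge0 ltW.
  by rewrite mulr_gt0 ?subr_gt0 // exprn_even_gt0.
Qed.

Lemma cov_prod_gammaE (R : realType) n (t : 'I_n -> R) :
  cov_prod_gamma t =
  diag_mx (\row_k (2^-1 * coth (t (mxtens_unindex k).1 / 2))).
Proof.
rewrite /cov_prod_gamma -diag_const_mx tensmx_diag.
by congr diag_mx; apply/rowP => k; rewrite !mxE mulr1.
Qed.

Lemma mx_gt_cov_prod_gamma (R : realType) n (t1 t2 : 'I_n -> R) :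
  (forall j, 0 < t1 j) -> (forall j, 0 < t2 j) ->
  mx_gt (cov_prod_gamma t1) (cov_prod_gamma t2) <-> (forall j, t1 j < t2 j).
Proof.
move=> t1_gt0 t2_gt0; rewrite !cov_prod_gammaE mx_gt_diag.
have ltr_cov j : (2^-1 * coth (t2 j / 2) < 2^-1 * coth (t1 j / 2)) = (t1 j < t2 j).
  by rewrite ltr_pM2l // ltr_coth ?posrE ?divr_gt0 // ltr_pM2r.
split=> [lt_cov j | lt_t k]; last by rewrite !mxE ltr_cov.
by have := lt_cov (mxtens_index (j, ord0)); rewrite !mxE mxtens_indexK ltr_cov.
Qed.

Section ESum.
Variable R : realType.
Local Open Scope classical_set_scope.
Local Open Scope ereal_scope.

Lemma esum_diag (I : choiceType) (f : I -> I -> R) :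
  \esum_(ij in [set: I * I]) (f ij.1 ij.2 * (ij.1 == ij.2)%:R)%:E =
  \esum_(i in [set: I]) (f i i)%:E.
Proof.
pose g ij := (f ij.1 ij.2 * (ij.1 == ij.2)%:R)%:E.
have -> : \esum_(i in [set: I]) (f i i)%:E = \esum_(i in [set: I]) g (i, i).
  by apply: eq_esum => i _; rewrite /g /= eqxx mulr1.
rewrite -(esum_image _ (fun i => (i, i)) g) => [|i j _ _ [] //].
rewrite [RHS]esum_mkcond; apply: eq_esum => -[i j] _ /=.
case: ifPn => // /negP off_diag; case: eqVneq => [eq_ij|]; last by rewrite mulr0.
by exfalso; apply: off_diag; rewrite eq_ij; apply/mem_set; exists j.
Qed.

Lemma esum_eqy_inj (T : choiceType) (F : T -> R) (e : nat -> T) (c : R) :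
  (0 < c)%R -> injective e -> (forall m, c <= F (e m))%R ->
  \esum_(t in [set: T]) (F t)%:E = +oo.
Proof.
move=> c_gt0 e_inj c_le_F; apply/eqyP => A A_gt0.
pose N := (Num.truncn (A / c)).+1.
apply: esum_ge; exists (e @` `I_N); first by split=> //; exact: finite_image.
rewrite fsbig_image; last by move=> i j _ _ /e_inj.
rewrite -fsbig_ord sumEFin lee_fin.
apply: (le_trans _ (ler_sum _ (fun (m : 'I_N) _ => c_le_F m))).
rewrite sumr_const card_ord -mulr_natl -ler_pdivrMr //.
exact/ltW/truncnS_gt.
Qed.

Lemma esum_prod_le (I : finType) (f : I -> nat -> R) (B : I -> R) :
  (forall j m, 0 <= f j m)%R -> (forall j M, \sum_(m < M) f j m <= B j)%R ->
  \esum_(k in [set: {ffun I -> nat}]) (\prod_j f j (k j))%:E <= (\prod_j B j)%:E.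
Proof.
move=> f_ge0 f_le; apply: ge_ereal_sup => _ [X [finX _] <-].
(* A finite family of occupation vectors lies in a box [0, M)^I, over which the
   sum of products factorizes into a product of partial sums. *)
pose M := (\max_(k <- fset_set X) \max_j k j).+1.
pose box (b : {ffun I -> 'I_M}) : {ffun I -> nat} := [ffun j => nat_of_ord (b j)].
have X_box : {subset X <= box @` setT}.
  move=> k /set_mem Xk; apply/mem_set; exists [ffun j => inord (k j)] => //.
  apply/ffunP => j; rewrite !ffunE inordK // ltnS.
  apply: (@leq_trans (\max_j k j)); first exact: leq_bigmax.
  apply: (@leq_bigmax_seq _ _ xpredT (fun k : {ffun I -> nat} => \max_j k j)) => //.
  by rewrite in_fset_set //; apply/mem_set.
apply: le_trans (lee_fsum_nneg_subset finX (finite_image box finite_finset) X_box _) _.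
  by move=> k _; rewrite lee_fin prodr_ge0.
rewrite fsbig_image; last first.
  by move=> b b' _ _ /ffunP eq_b; apply/ffunP => j; apply/val_inj; have := eq_b j; rewrite !ffunE.
have -> : [set: {ffun I -> 'I_M}] = [set` enum {ffun I -> 'I_M}].
  by apply/seteqP; split => // b _ /=; rewrite mem_enum.
rewrite -fsbig_seq ?enum_uniq // big_enum /= sumEFin lee_fin.
have -> : (\sum_b \prod_j f j (box b j) = \prod_j \sum_(m < M) f j m)%R.
  by rewrite bigA_distr_bigA; apply: eq_bigr => b _; apply: eq_bigr => j _; rewrite ffunE.
by apply: ler_prod => j _; rewrite f_le andbT sumr_ge0.
Qed.

Lemma esum_prod_geometric_lty (I : finType) (c x : I -> R) :
  (forall j, 0 < c j)%R -> (forall j, 0 < x j)%R ->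
  \esum_(k in [set: {ffun I -> nat}]) (\prod_j (c j * x j ^+ k j))%:E < +oo
  <-> (forall j, x j < 1)%R.
Proof.
move=> c_gt0 x_gt0; split=> [S_lty j | x_lt1].
- have [//|x_ge1] := ltrP (x j) 1.
  pose line m : {ffun I -> nat} := [ffun i => if i == j then m else 0%N].
  have line_inj : injective line by move=> m m' /ffunP/(_ j); rewrite !ffunE eqxx.
  suff S_eqy : \esum_(k in [set: {ffun I -> nat}]) (\prod_j (c j * x j ^+ k j))%:E = +oo.
    by move: S_lty; rewrite S_eqy ltxx.
  apply: (@esum_eqy_inj _ _ line (\prod_j c j)) => //; first exact: prodr_gt0.
  move=> m; apply: ler_prod => i _; rewrite (ltW (c_gt0 i)) ler_pMr // ffunE.
  by case: eqP => [->|_]; rewrite /= ?expr0 ?exprn_ege1.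
- apply: (le_lt_trans _ (ltry (\prod_j (c j / (1 - x j)))%R)).
  apply: (@esum_prod_le I (fun j m => c j * x j ^+ m)%R) => [j m | j M].
    by rewrite mulr_ge0 ?exprn_ge0 ?ltW.
  have := geometric_le_lim M (ltW (c_gt0 j)) (x_gt0 j).
  by rewrite gtr0_norm // seriesEord /=; apply.
Qed.
End ESum.

Section GammaStates.
Variable R : realType.

Lemma gamma_eig_ge0 (t : R) k : 0 <= t -> 0 <= gamma_eig t k.
Proof. by move=> t_ge0; rewrite mulr_ge0 ?expR_ge0 // subr_ge0 expR_le1 oppr_le0. Qed.

Lemma powR_gamma_eig (t a : R) k : 0 <= t ->
  gamma_eig t k `^ a = (1 - expR (- t)) `^ a * expR (- (a * t)) ^+ k.
Proof.
move=> t_ge0; rewrite powRM ?expR_ge0 ?subr_ge0 ?expR_le1 ?oppr_le0 //.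
by rewrite -expRM -expRM_natl; congr (_ * expR _); ring.
Qed.

Lemma powR_prod (I : finType) (f : I -> R) a :
  (forall i, 0 <= f i) -> (\prod_i f i) `^ a = \prod_i f i `^ a.
Proof.
move=> f_ge0; elim: (index_enum I) => [|i s IH]; first by rewrite !big_nil powR1.
by rewrite !big_cons powRM ?IH ?prodr_ge0.
Qed.

Lemma renyi_sum_prod_gamma n (r s : 'I_n -> R) a :
  (forall j, 0 <= r j) -> (forall j, 0 <= s j) ->
  renyi_sum (prod_gamma_eig r) (prod_gamma_eig s) (@fock_overlap2 R n) a =
  \esum_(k in [set: {ffun 'I_n -> nat}])
     (\prod_j ((1 - expR (- r j)) `^ a * (1 - expR (- s j)) `^ (1 - a)
               * expR ((a - 1) * s j - a * r j) ^+ k j))%:E.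
Proof.
move=> r_ge0 s_ge0; rewrite /renyi_sum /fock_overlap2.
rewrite (@esum_diag _ _ (fun k l => prod_gamma_eig r k `^ a * prod_gamma_eig s l `^ (1 - a))).
apply: eq_esum => k _; congr EFin.
rewrite /prod_gamma_eig !powR_prod => [|j|j]; last 2 first; [exact: gamma_eig_ge0..|].
rewrite -big_split; apply: eq_bigr => j _ /=.
rewrite !powR_gamma_eig // mulrACA -exprMn -!expRD; congr (_ * expR _ ^+ _); ring.
Qed.
End GammaStates.

Lemma renyi_div_lty (R : realType) (I J : choiceType) (p : I -> R) (q : J -> R)
    (ov : I -> J -> R) (a : R) :
  (renyi_div p q ov a < +oo)%E = (renyi_sum p q ov a < +oo)%E.
Proof. by rewrite /renyi_div /= [RHS]ltey; case: eqP; rewrite ?ltxx ?ltry. Qed.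

Theorem proposition3p6 (R : realType) (n : nat) (r s : 'I_n -> R) (alpha : R)
  (hr : forall j, 0 < r j) (hs : forall j, 0 < s j) (halpha : 1 < alpha) :
  (renyi_prod_gamma r s alpha < +oo)%E <->
  mx_gt (cov_prod_gamma (fun j => (alpha - 1) * s j))
        (cov_prod_gamma (fun j => alpha * r j)).
Proof.
have alpha_gt0 : 0 < alpha by apply: lt_trans halpha.
have coef_gt0 (t : R) : 0 < t -> 0 < 1 - expR (- t) by rewrite subr_gt0 expR_lt1 oppr_lt0.
rewrite mx_gt_cov_prod_gamma => [|j|j]; rewrite ?mulr_gt0 ?subr_gt0 //.
rewrite /renyi_prod_gamma renyi_div_lty renyi_sum_prod_gamma => [|j|j]; rewrite ?ltW //.
rewrite esum_prod_geometric_lty => [|j|j]; rewrite ?mulr_gt0 ?powR_gt0 ?coef_gt0 ?expR_gt0 //.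
by split=> lt_a j; have := lt_a j; rewrite expR_lt1 subr_lt0.
Qed.
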